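(* Let $A\in\mathbb{R}^{n\times n}$ be symmetric with smallest eigenvalue $\alpha_n$, $g\in\mathbb{R}^n$ nonzero, $\Delta>0$, and let $x_{opt}$ be a global minimizer of $\frac12x^TAx+x^Tg$ subject to $\|x\|\le\Delta$ with Lagrange multiplier $\lambda_{opt}\ge0$ (i.e. $(A+\lambda_{opt}I)x_{opt}=-g$, $\lambda_{opt}(\Delta-\|x_{opt}\|)=0$, $A+\lambda_{opt}I\succeq0$). Suppose $\|x_{opt}\|=\Delta$. Let $$M=\begin{pmatrix}-A&\frac{gg^T}{\Delta^2}\\ I&-A\end{pmatrix}\in\mathbb{R}^{2n\times2n}.$$ Then the TRS is in the easy case, i.e. $\lambda_{opt}>-\alpha_n$, if and only if $\lambda_{opt}$ is a simple eigenvalue of $M$.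
   Context: Norms are Euclidean. By standard theory either $\lambda_{opt}>-\alpha_n$ (easy case) or $\lambda_{opt}=-\alpha_n$ (hard case, in which $g\perp\mathcal{N}(A-\alpha_nI)$). *)

From HB Require Import structures.
From mathcomp Require Import all_boot all_order all_algebra.
Set Implicit Arguments. Unset Strict Implicit. Unset Printing Implicit Defensive.
Import Order.TTheory GRing.Theory Num.Theory.
Local Open Scope ring_scope.

Definition vnorm (R : rcfType) (n : nat) (x : 'cV[R]_n) : R :=
  Num.sqrt (\sum_(i < n) x i 0 ^+ 2).

Definition trs_obj (R : rcfType) (n : nat) (A : 'M[R]_n) (g x : 'cV[R]_n) : R :=
  2^-1 * (x^T *m A *m x) 0 0 + (x^T *m g) 0 0.

Definition psd (R : rcfType) (n : nat) (B : 'M[R]_n) : Prop :=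
  forall v : 'cV[R]_n, 0 <= (v^T *m B *m v) 0 0.

Definition Mmat (R : rcfType) (n : nat) (A : 'M[R]_n) (g : 'cV[R]_n) (D : R)
  : 'M[R]_(n + n) :=
  block_mx (- A) ((D ^+ 2)^-1 *: (g *m g^T)) 1%:M (- A).

Definition simple_eigenvalue (R : rcfType) (m : nat) (B : 'M[R]_m) (l : R) : Prop :=
  mup l (char_poly B) = 1%N.

(* Write B = A + lam I and s = X - lam.  Since B is positive semidefinite, the
   easy case -alpha < lam says exactly that B is invertible.  Eliminating the
   identity block gives char_poly M = det ((X + A)^2 - G) with G = g g^T / D^2,
   and X + A = s + B; as g = - B x, every G z is a multiple of B x.
   If B is singular, a null vector y of B is also killed by G, so the pencil
   maps y to s^2 y and s^2 divides char_poly M.  If B is invertible,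
   u = B^-1 x lies in the kernel of K = B^2 - G because x^T x = D^2, so the
   pencil maps u to s (s u + 2 x) and Cramer's rule splits off a single factor
   s.  The remaining cofactor is nonzero at lam: ker K is spanned by u, and
   2 x is not in the range of the symmetric K because u^T x = u^T B u > 0. *)

From HB Require Import structures.
From mathcomp Require Import all_boot all_order all_algebra.
From mathcomp Require Import ring lra.
Import Order.TTheory GRing.Theory Num.Theory.
Set Implicit Arguments. Unset Strict Implicit. Unset Printing Implicit Defensive.
Local Open Scope ring_scope.

Section ColumnReplacement.
Variables (R : comNzRingType) (n : nat).
Implicit Types (N : 'M[R]_n) (v w : 'cV[R]_n).

Definition col_replace N k w : 'M[R]_n :=
  \matrix_(i, j) if j == k then w i 0 else N i j.

Lemma det_col_replace N k w : \det (col_replace N k w) = (\adj N *m w) k 0.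
Proof.
rewrite (expand_det_col _ k) mxE; apply: eq_bigr => i _.
rewrite !mxE eqxx mulrC /cofactor; congr (_ * \det _ * _).
by apply/matrixP => a b; rewrite !mxE eq_sym (negbTE (neq_lift k b)).
Qed.

Lemma col_replace_cramer N v k c w : N *m v = c *: w ->
  \det N * v k 0 = c * \det (col_replace N k w).
Proof.
move=> Nv; rewrite det_col_replace.
have := congr1 (mulmx^~ v) (mul_adj_mx N).
rewrite -mulmxA Nv -scalemxAr mul_scalar_mx => /matrixP/(_ k 0).
by rewrite !mxE => ->.
Qed.

Lemma col_replace_mulmx N k w v :
  col_replace N k w *m v = N *m v + v k 0 *: (w - col k N).
Proof.
apply/colP => i; rewrite !mxE (bigD1 k) //= [in RHS](bigD1 k) //= !mxE eqxx.
rewrite (eq_bigr (fun j => N i j * v j 0)) => [|j /negbTE jk]; last first.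
  by rewrite mxE jk.
by rewrite [RHS]addrC addrA; congr (_ + _); ring.
Qed.

Lemma det_block_neg1 (P Q : 'M[R]_n) :
  \det (block_mx P Q (- 1%:M) P) = \det (P *m P + Q).
Proof.
set E := block_mx 0 (- 1%:M) 1%:M P.
have detE : \det E = 1.
  have -> : E = block_mx 1%:M (- 1%:M) 0 1%:M *m block_mx 1%:M 0 1%:M 1%:M
               *m block_mx 1%:M (- 1%:M) 0 1%:M *m block_mx 1%:M P 0 1%:M.
    rewrite !mulmx_block.
    rewrite !(mul0mx, mulmx0, mul1mx, mulmx1, addr0, add0r, mulNmx, mulmxN).
    by rewrite !subrr mul0mx oppr0 !add0r addNr addr0.
  by rewrite !(@det_mulmx R (n + n)) !(det_ublock, det_lblock) !det1 !mulr1.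
rewrite -[LHS]mul1r -[X in X * _]detE -det_mulmx mulmx_block.
rewrite !(mul0mx, mulmx0, mul1mx, mulmx1, addr0, add0r, mulNmx, mulmxN, opprK).
by rewrite subrr det_ublock det1 mul1r addrC.
Qed.

End ColumnReplacement.

Lemma map_col_replace (R S : comNzRingType) n (f : R -> S) (N : 'M[R]_n) k w :
  map_mx f (col_replace N k w) = col_replace (map_mx f N) k (map_mx f w).
Proof. by apply/matrixP => i j; rewrite !mxE; case: eqP; rewrite ?mxE. Qed.

Section FieldMatrix.
Variables (F : fieldType) (n : nat).

Lemma unitmxPn (B : 'M[F]_n) :
  reflect (exists2 v : 'cV_n, v != 0 & B *m v = 0) (B \notin unitmx).
Proof.
rewrite -unitmx_tr unitmxE unitfE negbK.
apply: (iffP det0P) => -[v v0 Bv].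
  by exists v^T; rewrite ?trmx_eq0 // -[B]trmxK -trmx_mul Bv trmx0.
by exists v^T; rewrite ?trmx_eq0 // -trmx_mul Bv trmx0.
Qed.

Lemma sym_eigenvalueP (A : 'M[F]_n) a : A^T = A ->
  reflect (exists2 v : 'cV_n, A *m v = a *: v & v != 0) (eigenvalue A a).
Proof.
move=> AT; apply: (iffP eigenvalueP) => -[v Av v0].
  by exists v^T; rewrite ?trmx_eq0 // -{1}AT -trmx_mul Av linearZ.
by exists v^T; rewrite ?trmx_eq0 // -{1}AT -trmx_mul Av linearZ.
Qed.

Lemma col_replace_unitmx (K : 'M[F]_n) k (u w : 'cV[F]_n) :
  u k 0 != 0 -> (forall v, K *m v = 0 -> exists c, v = c *: u) ->
  (forall v, K *m v != w) -> col_replace K k w \in unitmx.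
Proof.
move=> uk kerK notw; apply: contraT => /unitmxPn [v v0].
rewrite col_replace_mulmx => /eqP; rewrite addr_eq0 => /eqP Kv.
have [vk0 | vk] := eqVneq (v k 0) 0.
  move: Kv; rewrite vk0 scale0r oppr0 => /kerK [c vc].
  move: vk0; rewrite vc mxE => /eqP; rewrite mulf_eq0 (negbTE uk) orbF => /eqP c0.
  by move: v0; rewrite vc c0 scale0r eqxx.
case/negP: (notw (delta_mx k 0 - (v k 0)^-1 *: v)); apply/eqP.
rewrite mulmxBr -colE -scalemxAr Kv scalerN scalerA mulVf // scale1r opprK.
by rewrite addrC subrK.
Qed.

End FieldMatrix.

Section PolynomialMatrix.
Variables (F : fieldType) (n : nat).
Local Notation polyC_mx := (map_mx (@polyC F)).

Lemma dvdp_det_mulmx (N : 'M[{poly F}]_n) (y : 'cV[F]_n) c w :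
  y != 0 -> N *m polyC_mx y = c *: w -> c %| \det N.
Proof.
move=> /matrix0Pn [k [j ykj]] /(col_replace_cramer k); rewrite (ord1 j) in ykj.
rewrite mxE mulrC mul_polyC => /(congr1 (fun p => c %| p)).
by rewrite dvdpZr // dvdp_mulIl.
Qed.

Lemma mup_det_eq1 (N : 'M[{poly F}]_n) (u : 'cV[F]_n) lam w k :
  u k 0 != 0 -> N *m polyC_mx u = ('X - lam%:P) *: w ->
  col_replace (map_mx (horner_eval lam) N) k (map_mx (horner_eval lam) w) \in unitmx ->
  mup lam (\det N) = 1%N.
Proof.
move=> uk /(col_replace_cramer k); rewrite mxE => Nu unitM.
have -> : \det N = ('X - lam%:P) * (\det (col_replace N k w) * ((u k 0)^-1)%:P).
  by rewrite mulrA -Nu -mulrA -polyCM mulfV // mulr1.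
rewrite mupMl; first by rewrite -[X in mup _ X]expr1 mup_XsubCX eqxx.
rewrite rootE hornerM hornerC mulf_eq0 invr_eq0 (negbTE uk) orbF.
by rewrite -horner_evalE -det_map_mx map_col_replace -unitfE -unitmxE.
Qed.

End PolynomialMatrix.

Section QuadraticForms.
Variables (R : rcfType) (n : nat).
Implicit Types (B : 'M[R]_n) (v y : 'cV[R]_n).

Lemma dotmx_self y : (y^T *m y) 0 0 = \sum_i y i 0 ^+ 2.
Proof. by rewrite mxE; apply: eq_bigr => i _; rewrite mxE expr2. Qed.

Lemma sqr_vnorm y : vnorm y ^+ 2 = (y^T *m y) 0 0.
Proof. by rewrite dotmx_self sqr_sqrtr // sumr_ge0 // => i _; exact: sqr_ge0. Qed.

Lemma dotmx_self_gt0 y : y != 0 -> 0 < (y^T *m y) 0 0.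
Proof.
move=> y0; rewrite dotmx_self lt_def sumr_ge0 ?andbT => [|i _]; last exact: sqr_ge0.
apply: contra y0 => /eqP /psumr_eq0P y0; apply/eqP/matrixP => i j.
rewrite (ord1 j) mxE; apply/eqP; rewrite -sqrf_eq0.
by apply/eqP/y0 => // l _; exact: sqr_ge0.
Qed.

Lemma quad_form_shift B v y t :
  ((v + t *: y)^T *m B *m (v + t *: y)) 0 0 =
  (v^T *m B *m v) 0 0 + t * (v^T *m B *m y) 0 0 + t * (y^T *m B *m v) 0 0
  + t ^+ 2 * (y^T *m B *m y) 0 0.
Proof.
rewrite [(v + _)^T]linearD /= [(t *: y)^T]linearZ /= !mulmxDl !mulmxDr.
by rewrite -!scalemxAl -!scalemxAr !mxE expr2 !addrA mulrA.
Qed.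

Lemma psd_quad_eq0 B v : B^T = B -> psd B ->
  (v^T *m B *m v) 0 0 = 0 -> B *m v = 0.
Proof.
move=> BT psdB v0; set y := B *m v.
set a := (y^T *m y) 0 0; set b := (y^T *m B *m y) 0 0.
have b0 : 0 <= b := psdB y.
have vBy : (v^T *m B *m y) 0 0 = a by rewrite /a /y -{1}BT -trmx_mul mulmxA.
have yBv : (y^T *m B *m v) 0 0 = a by rewrite /a /y -mulmxA.
pose t := - a / (b + 1).
have tb : t * (b + 1) = - a by rewrite /t mulfVK // gt_eqF // ltr_wpDl.
(* [t] minimises [2 t a + t^2 b] up to the [+ 1] that keeps it defined when [b = 0] *)
have := psdB (v + t *: y); rewrite quad_form_shift v0 vBy yBv -/b add0r => q0.
have : 0 <= (b + 1) ^+ 2 * (t * a + t * a + t ^+ 2 * b) by rewrite mulr_ge0 ?sqr_ge0.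
have -> : (b + 1) ^+ 2 * (t * a + t * a + t ^+ 2 * b) =
  2 * a * (t * (b + 1)) * (b + 1) + (t * (b + 1)) ^+ 2 * b by ring.
rewrite tb => ineq; apply/eqP; apply: contraTT ineq.
by move=> /dotmx_self_gt0; rewrite -/a -ltNge => a0; nra.
Qed.

End QuadraticForms.

Section Pencil.
Variables (R : rcfType) (n : nat) (A : 'M[R]_n) (g : 'cV[R]_n) (D lam : R).
Local Notation polyC_mx := (map_mx (@polyC R)).
Local Notation B := (A + lam%:M).
Local Notation G := ((D ^+ 2)^-1 *: (g *m g^T)).
Local Notation K := (B *m B - G).
Local Notation P := ('X%:M + polyC_mx A).
Local Notation N := (P *m P - polyC_mx G).
Local Notation s := ('X - lam%:P).

Lemma char_poly_Mmat : char_poly (Mmat A g D) = \det N.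
Proof.
rewrite /char_poly /char_poly_mx /Mmat map_block_mx (scalar_mx_block n n).
rewrite opp_block_mx add_block_mx !map_mxN map_mx1 !opprK !sub0r.
by rewrite -det_block_neg1.
Qed.

Lemma pencil_mulmx (z : 'cV[R]_n) : N *m polyC_mx z =
  (s * s) *: polyC_mx z + s *: polyC_mx (B *m z + B *m z) + polyC_mx (K *m z).
Proof.
have P_shift : P = s%:M + polyC_mx B.
  by rewrite map_mxD map_scalar_mx raddfB /= addrACA addNr addr0.
have Pz y : P *m polyC_mx y = s *: polyC_mx y + polyC_mx (B *m y).
  by rewrite P_shift mulmxDl mul_scalar_mx map_mxM.
rewrite mulmxBl -mulmxA Pz mulmxDr -scalemxAr Pz Pz -!map_mxM.
by rewrite mulmxBl mulmxA map_mxB map_mxD !scalerDr scalerA !addrA.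
Qed.

Lemma horner_eval_pencil : map_mx (horner_eval lam) N = K.
Proof.
have evC m p (M : 'M[R]_(m, p)) : map_mx (horner_eval lam) (polyC_mx M) = M.
  by rewrite -map_mx_comp; apply: map_mx_id => a /=; rewrite horner_evalE hornerC.
rewrite map_mxB map_mxM map_mxD map_scalar_mx /= horner_evalE hornerX !evC.
by rewrite [lam%:M + A]addrC.
Qed.

Variable x : 'cV[R]_n.
Hypotheses (AT : A^T = A) (psdB : psd B) (Bx : B *m x = - g).
Hypotheses (D0 : D != 0) (normx : (x^T *m x) 0 0 = D ^+ 2).

Let trB : B^T = B.
Proof. by rewrite linearD /= AT tr_scalar_mx. Qed.

Let G_mulmx z : G *m z = ((D ^+ 2)^-1 * (x^T *m B *m z) 0 0) *: (B *m x).
Proof.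
have -> : g *m g^T = B *m x *m (x^T *m B).
  by rewrite -[g]opprK -Bx linearN /= mulNmx mulmxN opprK trmx_mul trB.
rewrite -scalemxAl -(mulmxA (B *m x)) {1}(mx11_scalar (x^T *m B *m z)).
by rewrite mul_mx_scalar scalerA.
Qed.

Let trK : K^T = K.
Proof. by rewrite linearB /= trmx_mul trB linearZ /= trmx_mul trmxK. Qed.

Lemma dvdp_char_poly_Mmat : B \notin unitmx -> s ^+ 2 %| char_poly (Mmat A g D).
Proof.
case/unitmxPn => y y0 By0.
have Gy : G *m y = 0 by rewrite G_mulmx -mulmxA By0 mulmx0 mxE mulr0 scale0r.
rewrite char_poly_Mmat; apply: (dvdp_det_mulmx (w := polyC_mx y) y0).
rewrite pencil_mulmx mulmxBl -mulmxA By0 mulmx0 Gy subrr addr0 !map_mx0.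
by rewrite scaler0 !addr0 expr2.
Qed.

Lemma mup_char_poly_Mmat : B \in unitmx -> mup lam (char_poly (Mmat A g D)) = 1%N.
Proof.
move=> Bunit; set u := invmx B *m x.
have Binj : injective (@mulmx R n n 1 B) := can_inj (mulKmx Bunit).
have Bu : B *m u = x by rewrite mulKVmx.
have Ku : K *m u = 0.
  rewrite mulmxBl -mulmxA Bu G_mulmx -mulmxA Bu normx.
  by rewrite mulVf ?expf_neq0 // scale1r subrr.
have x0 : x != 0.
  by apply: contra_neq D0 => x0; apply/eqP; rewrite -sqrf_eq0 -normx x0 mulmx0 mxE.
have /matrix0Pn [k [j]] : u != 0 by apply: contraNneq x0 => u0; rewrite -Bu u0 mulmx0.
rewrite (ord1 j) => uk; rewrite char_poly_Mmat.
apply: (mup_det_eq1 (w := s *: polyC_mx u + polyC_mx (x + x)) uk).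
  by rewrite pencil_mulmx Bu Ku map_mx0 addr0 scalerDr scalerA.
have -> : map_mx (horner_eval lam) (s *: polyC_mx u + polyC_mx (x + x)) = x + x.
  apply/matrixP => i j'; rewrite !mxE /= !horner_evalE hornerD hornerM hornerXsubC.
  by rewrite subrr mul0r add0r hornerC.
rewrite horner_eval_pencil; apply: col_replace_unitmx uk _ _ => [v Kv | v].
  exists ((D ^+ 2)^-1 * (x^T *m B *m v) 0 0).
  apply: (Binj); rewrite -scalemxAr Bu; apply: (Binj).
  by rewrite mulmxA -scalemxAr -G_mulmx; apply/eqP; rewrite -subr_eq0 -mulmxBl Kv.
apply/eqP => Kv2x.
have uK : u^T *m K = 0 by rewrite -[u^T *m K]trmxK trmx_mul trmxK trK Ku trmx0.
move/(congr1 (fun M => (u^T *m M) 0 0)): Kv2x.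
rewrite mulmxA uK mul0mx -Bu mulmxDr mulmxA [RHS]mxE mxE => /esym/eqP.
rewrite -mulr2n mulrn_eq0 /= => /eqP /(psd_quad_eq0 trB psdB).
by rewrite Bu; apply/eqP.
Qed.

End Pencil.

Lemma easy_case_unitmx (R : rcfType) n (A : 'M[R]_n) alpha lam :
  A^T = A -> psd (A + lam%:M) -> eigenvalue A alpha ->
  (forall mu, eigenvalue A mu -> alpha <= mu) ->
  (- alpha < lam) = (A + lam%:M \in unitmx).
Proof.
move=> AT psdB eigA minA; apply/idP/idP => [lt_lam | Bunit].
  apply: contraTT lt_lam => /unitmxPn [y y0 By0]; rewrite -leNgt.
  suff /minA : eigenvalue A (- lam) by lra.
  apply/(sym_eigenvalueP _ AT); exists y => //; apply/eqP.
  by rewrite scaleNr -addr_eq0 -mul_scalar_mx -mulmxDl By0.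
rewrite ltNge; apply: contraL Bunit => le_lam; apply/unitmxPn.
have [y Ay y0] := sym_eigenvalueP _ AT eigA; exists y => //.
have By : (A + lam%:M) *m y = (alpha + lam) *: y.
  by rewrite mulmxDl Ay mul_scalar_mx scalerDl.
have := psdB y; rewrite -mulmxA By -scalemxAr mxE.
rewrite pmulr_lge0 ?dotmx_self_gt0 // => ge0.
by rewrite (_ : alpha + lam = 0) ?scale0r //; lra.
Qed.

Theorem theorem4p2 (R : rcfType) (n : nat) (A : 'M[R]_n) (g : 'cV[R]_n)
    (D alpha lam : R) (xopt : 'cV[R]_n) :
  A^T = A ->
  eigenvalue A alpha ->
  (forall mu, eigenvalue A mu -> alpha <= mu) ->
  g != 0 ->
  0 < D ->
  vnorm xopt <= D ->
  (forall y : 'cV[R]_n, vnorm y <= D -> trs_obj A g xopt <= trs_obj A g y) ->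
  0 <= lam ->
  (A + lam%:M) *m xopt = - g ->
  lam * (D - vnorm xopt) = 0 ->
  psd (A + lam%:M) ->
  vnorm xopt = D ->
  (- alpha < lam <-> simple_eigenvalue (Mmat A g D) lam).
Proof.
move=> AT eigA minA _ D_gt0 _ _ _ Bx _ psdB normx.
have D0 : D != 0 by rewrite gt_eqF.
have xx : (xopt^T *m xopt) 0 0 = D ^+ 2 by rewrite -sqr_vnorm normx.
rewrite (easy_case_unitmx AT psdB eigA minA) /simple_eigenvalue.
have [Bunit | Bsing] := boolP (A + lam%:M \in unitmx).
  by rewrite (mup_char_poly_Mmat AT psdB Bx D0 xx Bunit).
split=> // mup1; have := dvdp_char_poly_Mmat D AT Bx Bsing.
by rewrite -mup_geq ?mup1 // monic_neq0 // char_poly_monic.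
Qed.
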